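(* Let $p\ge 2$ and $d\in\{0,\dots,9\}$ be integers. The sequence $\big(P_{(d,10^n-1,p)}\big)_{n\ge p}$ converges, as $n\to\infty$, to $$\frac{1}{10}+\frac{n_{(d,p)}+m_{(d,p)}-9l_{(d,p)}-d\,k_{(d,p)}}{9\times10^{p-1}}+\frac{1}{90}\ln\Big(\frac{10^{p-1}+d}{10^{p-1}}\Big)+\frac{1}{9}\ln\Big(\frac{10^{p}}{10^{p}-10+d+1}\Big),$$ where $k_{(d,p)}=\sum_{j=10^{p-2}}^{10^{p-1}-1}\ln\frac{10j+d+1}{10j+d}$, $l_{(d,p)}=\sum_{j=10^{p-2}}^{10^{p-1}-1}j\ln\frac{10j+d+1}{10j+d}$, $m_{(d,p)}=\sum_{j=10^{p-2}}^{10^{p-1}-2}\ln\frac{10(j+1)+d}{10j+d+1}$, and $n_{(d,p)}=\sum_{j=10^{p-2}}^{10^{p-1}-2}j\ln\frac{10(j+1)+d}{10j+d+1}$.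
   Context: For an integer $x\ge 10^{p-1}$, the ''$p$-th digit of $x$'' is the $p$-th digit of its decimal expansion counted from the left. For integers $p\ge2$, $d\in\{0,\dots,9\}$ and $m\ge 10^{p-1}$, let $N_d(m)$ be the number of integers $x$ with $10^{p-1}\le x\le m$ whose $p$-th digit is $d$. For $N\ge 10^{p-1}$, $$P_{(d,N,p)}=\frac{1}{N+1-10^{p-1}}\sum_{m=10^{p-1}}^{N}\frac{N_d(m)}{m+1-10^{p-1}},$$ which is the probability that the $p$-th digit of $x$ is $d$ when $m$ is chosen uniformly in $\{10^{p-1},\dots,N\}$ and then $x$ uniformly in $\{10^{p-1},\dots,m\}$. Here $\ln$ is the natural logarithm. *)

From Stdlib Require Import Reals Lra Lia Arith List.
From Coquelicot Require Import Coquelicot.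
Open Scope R_scope.

(* number of decimal digits of x (with ndigits 0 = 1); fuel-based recursion *)
Fixpoint ndigits_aux (fuel x : nat) : nat :=
  match fuel with
  | O => 1
  | S f => if Nat.ltb x 10 then 1 else S (ndigits_aux f (x / 10))
  end.
Definition ndigits (x : nat) : nat := ndigits_aux x x.

(* p-th decimal digit of x counted from the left (p >= 1); meaningful when x has
   at least p digits *)
Definition pth_digit (p x : nat) : nat :=
  (x / 10 ^ (ndigits x - p)) mod 10.

Definition Ncount (d p m : nat) : nat :=
  length (filter (fun x => Nat.eqb (pth_digit p x) d)
                 (seq (10 ^ (p - 1)) (S m - 10 ^ (p - 1)))).

Definition Pdig (d N p : nat) : R :=
  / INR (S N - 10 ^ (p - 1)) *
  fold_right Rplus 0
    (map (fun m => INR (Ncount d p m) / INR (S m - 10 ^ (p - 1)))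
         (seq (10 ^ (p - 1)) (S N - 10 ^ (p - 1)))).

(* sum_{j=a}^{b} f j  (empty if b < a) *)
Definition sumR (a b : nat) (f : nat -> R) : R :=
  fold_right Rplus 0 (map f (seq a (S b - a))).

Definition kdp (d p : nat) : R :=
  sumR (10 ^ (p - 2)) (10 ^ (p - 1) - 1)
    (fun j => ln ((10 * INR j + INR d + 1) / (10 * INR j + INR d))).
Definition ldp (d p : nat) : R :=
  sumR (10 ^ (p - 2)) (10 ^ (p - 1) - 1)
    (fun j => INR j * ln ((10 * INR j + INR d + 1) / (10 * INR j + INR d))).
Definition mdp (d p : nat) : R :=
  sumR (10 ^ (p - 2)) (10 ^ (p - 1) - 2)
    (fun j => ln ((10 * (INR j + 1) + INR d) / (10 * INR j + INR d + 1))).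
Definition ndp (d p : nat) : R :=
  sumR (10 ^ (p - 2)) (10 ^ (p - 1) - 2)
    (fun j => INR j * ln ((10 * (INR j + 1) + INR d) / (10 * INR j + INR d + 1))).

From Stdlib Require Import Reals Lra Lia List.
From Coquelicot Require Import Coquelicot.
Open Scope R_scope.

(* Write a = 10^(p-1) and S_k = sum_(a <= m < a 10^k) N_d(m) / (m + 1 - a), so that
   P_(d, 10^(n+p) - 1, p) = S_(n+1) / (a 10^(n+1) - a).  The integers with p + k digits
   split into blocks of 10^(k+1) consecutive integers sharing their first p - 1 digits j,
   where 10^(p-2) <= j < a.  Across such a block N_d is first constant, then grows by
   one per step while the p-th digit equals d, then is constant again, so the
   contribution of the block to S_(k+1) is a combination of harmonic sums; divided by
   10^k it tends to an explicit sum of logarithms L_j.  Hence x_k = S_k / 10^k satisfies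
   x_(k+1) = (x_k + y_k) / 10 with y_k tending to L = sum_j L_j, which forces
   x_k -> L / 9 and P -> L / (9 a).  Summation by parts turns L / (9 a) into the stated
   constant. *)

Definition sum_seq (lo n : nat) (f : nat -> R) : R :=
  fold_right Rplus 0 (map f (seq lo n)).

Lemma sum_seq_S lo n f : sum_seq lo (S n) f = f lo + sum_seq (S lo) n f.
Proof. reflexivity. Qed.

Lemma sum_seq_app lo n1 n2 f :
  sum_seq lo (n1 + n2) f = sum_seq lo n1 f + sum_seq (lo + n1) n2 f.
Proof.
  unfold sum_seq; rewrite seq_app, map_app, fold_right_app.
  generalize (fold_right Rplus 0 (map f (seq (lo + n1) n2))) as s; intros s.
  induction (map f (seq lo n1)) as [|x l IH]; simpl; [lra | rewrite IH; lra].
Qed.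

Lemma sum_seq_Sr lo n f : sum_seq lo (S n) f = sum_seq lo n f + f (lo + n)%nat.
Proof. rewrite <- Nat.add_1_r, sum_seq_app; unfold sum_seq; simpl; lra. Qed.

Lemma sum_seq_ext lo n f g :
  (forall i, (lo <= i < lo + n)%nat -> f i = g i) -> sum_seq lo n f = sum_seq lo n g.
Proof.
  revert lo; induction n as [|n IH]; intros lo H; [reflexivity|].
  rewrite !sum_seq_S, (H lo), (IH (S lo)); [reflexivity | intros; apply H; lia | lia].
Qed.

Lemma sum_seq_le lo n f g :
  (forall i, (lo <= i < lo + n)%nat -> f i <= g i) -> sum_seq lo n f <= sum_seq lo n g.
Proof.
  revert lo; induction n as [|n IH]; intros lo H; [unfold sum_seq; simpl; lra|].
  rewrite !sum_seq_S; apply Rplus_le_compat; [apply H; lia | apply IH; intros; apply H; lia].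
Qed.

Lemma sum_seq_plus lo n f g :
  sum_seq lo n (fun i => f i + g i) = sum_seq lo n f + sum_seq lo n g.
Proof.
  revert lo; induction n as [|n IH]; intros lo; [unfold sum_seq; simpl; lra|].
  rewrite !sum_seq_S, IH; ring.
Qed.

Lemma sum_seq_minus lo n f g :
  sum_seq lo n (fun i => f i - g i) = sum_seq lo n f - sum_seq lo n g.
Proof.
  revert lo; induction n as [|n IH]; intros lo; [unfold sum_seq; simpl; lra|].
  rewrite !sum_seq_S, IH; ring.
Qed.

Lemma sum_seq_scal_l lo n c f :
  sum_seq lo n (fun i => c * f i) = c * sum_seq lo n f.
Proof.
  revert lo; induction n as [|n IH]; intros lo; [unfold sum_seq; simpl; lra|].
  rewrite !sum_seq_S, IH; ring.
Qed.

Lemma sum_seq_div_r lo n c f :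
  sum_seq lo n (fun i => f i / c) = sum_seq lo n f / c.
Proof.
  revert lo; induction n as [|n IH]; intros lo; [unfold sum_seq, Rdiv; simpl; ring|].
  rewrite !sum_seq_S, IH; unfold Rdiv; ring.
Qed.

Lemma sum_seq_const lo n c : sum_seq lo n (fun _ => c) = INR n * c.
Proof.
  revert lo; induction n as [|n IH]; intros lo; [unfold sum_seq; simpl; lra|].
  rewrite sum_seq_S, IH, S_INR; ring.
Qed.

Lemma sum_seq_shift lo k n f :
  sum_seq (lo + k) n f = sum_seq lo n (fun i => f (i + k)%nat).
Proof.
  revert lo; induction n as [|n IH]; intros lo; [reflexivity|].
  rewrite !sum_seq_S, <- IH; reflexivity.
Qed.

Lemma sum_seq_telescope lo n F :
  sum_seq lo n (fun i => F (S i) - F i) = F (lo + n)%nat - F lo.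
Proof.
  revert lo; induction n as [|n IH]; intros lo.
  - rewrite Nat.add_0_r; unfold sum_seq; simpl; lra.
  - rewrite sum_seq_S, IH, Nat.add_succ_comm; ring.
Qed.

Lemma sum_seq_blocks lo n L f :
  sum_seq (lo * L) (n * L) f = sum_seq lo n (fun j => sum_seq (j * L) L f).
Proof.
  revert lo; induction n as [|n IH]; intros lo; [reflexivity|].
  rewrite sum_seq_S, <- IH; simpl (S n * L)%nat.
  rewrite sum_seq_app, (Nat.add_comm (lo * L)); reflexivity.
Qed.

Lemma is_lim_seq_sum_seq lo n (u : nat -> nat -> R) (l : nat -> R) :
  (forall j, (lo <= j < lo + n)%nat -> is_lim_seq (u j) (l j)) ->
  is_lim_seq (fun k => sum_seq lo n (fun j => u j k)) (sum_seq lo n l).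
Proof.
  revert lo; induction n as [|n IH]; intros lo H; [apply is_lim_seq_const|].
  rewrite sum_seq_S; apply (is_lim_seq_plus' (fun k => u lo k));
    [apply H; lia | apply IH; intros; apply H; lia].
Qed.

Lemma pow10_ge1_nat k : (1 <= 10 ^ k)%nat.
Proof. apply Nat.neq_0_lt_0, Nat.pow_nonzero; lia. Qed.

Lemma INR_10 : INR 10 = 10.
Proof. simpl; ring. Qed.

Lemma INR_pow10 k : INR (10 ^ k) = 10 ^ k.
Proof. rewrite pow_INR, INR_10; reflexivity. Qed.

Lemma pow10_ge1 k : 1 <= 10 ^ k.
Proof. rewrite <- INR_pow10; apply (le_INR 1), pow10_ge1_nat. Qed.

Lemma lim_inv_pow10 : is_lim_seq (fun k => / 10 ^ k) 0.
Proof.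
  apply (is_lim_seq_ext (fun k => (/ 10) ^ k)); [intros; apply pow_inv|].
  apply is_lim_seq_geom; rewrite Rabs_pos_eq; lra.
Qed.

Lemma is_lim_seq_sub_div_pow10 x y : is_lim_seq (fun k => x - y / 10 ^ k) x.
Proof.
  pose proof (is_lim_seq_minus' _ _ x (y * 0) (is_lim_seq_const x)
    (is_lim_seq_mult' _ _ y 0 (is_lim_seq_const y) lim_inv_pow10)) as H.
  rewrite Rmult_0_r, Rminus_0_r in H; exact H.
Qed.

(** * Harmonic sums *)

Lemma ln_le_sub1 y : 0 < y -> ln y <= y - 1.
Proof.
  intros Hy; rewrite <- (ln_exp (y - 1)); apply ln_le; [exact Hy|].
  generalize (exp_ineq1_le (y - 1)); lra.
Qed.

Lemma ln_succ_sub_bounds x : 0 < x -> / (x + 1) <= ln (x + 1) - ln x <= / x.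
Proof.
  intros Hx; split.
  - generalize (ln_le_sub1 (x / (x + 1)) ltac:(apply Rdiv_lt_0_compat; lra)).
    rewrite ln_div by lra.
    replace (x / (x + 1) - 1) with (- / (x + 1)) by (field; lra); lra.
  - generalize (ln_le_sub1 ((x + 1) / x) ltac:(apply Rdiv_lt_0_compat; lra)).
    rewrite ln_div by lra.
    replace ((x + 1) / x - 1) with (/ x) by (field; lra); lra.
Qed.

Definition harm (X n : nat) : R := sum_seq X n (fun x => / INR x).

Lemma harm_bounds X n : (1 <= X)%nat ->
  ln (INR (X + n) / INR X) <= harm X n <= ln (INR (X + n) / INR X) + / INR X.
Proof.
  intros HX.
  assert (HXR : 0 < INR X) by (apply lt_0_INR; lia).
  assert (Hstep : forall i, (X <= i)%nat ->
    / INR (S i) <= ln (INR (S i)) - ln (INR i) <= / INR i).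
  { intros i Hi; rewrite S_INR; apply ln_succ_sub_bounds, lt_0_INR; lia. }
  rewrite ln_div by (try apply lt_0_INR; lia).
  split.
  - rewrite <- (sum_seq_telescope X n (fun i => ln (INR i))).
    apply sum_seq_le; intros i Hi; apply Hstep; lia.
  - assert (Hup : harm X n <= sum_seq X n (fun i => ln (INR (S i)) - ln (INR i))
                            - sum_seq X n (fun i => / INR (S i) - / INR i)).
    { unfold harm; rewrite <- sum_seq_minus; apply sum_seq_le; intros i Hi.
      generalize (Hstep i ltac:(lia)); lra. }
    rewrite (sum_seq_telescope X n (fun i => ln (INR i))),
      (sum_seq_telescope X n (fun i => / INR i)) in Hup.
    assert (0 < / INR (X + n)) by (apply Rinv_0_lt_compat, lt_0_INR; lia).
    lra.
Qed.

Lemma is_lim_seq_harm (X n : nat -> nat) (r : R) : 0 < r ->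
  (forall k, (1 <= X k)%nat) -> is_lim_seq (fun k => / INR (X k)) 0 ->
  is_lim_seq (fun k => INR (X k + n k) / INR (X k)) r ->
  is_lim_seq (fun k => harm (X k) (n k)) (ln r).
Proof.
  intros Hr HX Hinv Hratio.
  assert (Hln : is_lim_seq (fun k => ln (INR (X k + n k) / INR (X k))) (ln r)).
  { apply (filterlim_comp _ _ _ _ ln _ (locally r)); [exact Hratio|].
    apply continuous_ln, Hr. }
  apply (is_lim_seq_le_le _ _ _ _ (fun k => harm_bounds (X k) (n k) (HX k))); [exact Hln|].
  rewrite <- (Rplus_0_r (ln r)); apply is_lim_seq_plus'; assumption.
Qed.

Lemma is_lim_seq_harm_pow10 al de c : (c < al)%nat ->
  is_lim_seq (fun k => harm (al * 10 ^ k - c) (de * 10 ^ k))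
    (ln (INR (al + de) / INR al)).
Proof.
  intros Hc.
  assert (HX : forall b k, (c < b)%nat -> (10 ^ k <= b * 10 ^ k - c)%nat).
  { intros b k Hb; generalize (pow10_ge1_nat k); nia. }
  assert (HXR : forall b k, (c < b)%nat ->
    INR (b * 10 ^ k - c) = 10 ^ k * (INR b - INR c / 10 ^ k)).
  { intros b k Hb; rewrite minus_INR by (generalize (HX b k Hb) (pow10_ge1_nat k); lia).
    rewrite mult_INR, INR_pow10; field; generalize (pow10_ge1 k); lra. }
  apply is_lim_seq_harm.
  - apply Rdiv_lt_0_compat; apply lt_0_INR; lia.
  - intros k; cbv beta; generalize (HX al k Hc) (pow10_ge1_nat k); lia.
  - apply (is_lim_seq_le_le (fun _ => 0) _ (fun k => / 10 ^ k));
      [|apply is_lim_seq_const | apply lim_inv_pow10].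
    intros k; rewrite <- INR_pow10; split.
    + left; apply Rinv_0_lt_compat, lt_0_INR; generalize (HX al k Hc) (pow10_ge1_nat k); lia.
    + apply Rinv_le_contravar; [apply lt_0_INR, pow10_ge1_nat | apply le_INR, HX, Hc].
  - apply (is_lim_seq_ext (fun k => (INR (al + de) - INR c / 10 ^ k)
                                    / (INR al - INR c / 10 ^ k))).
    { intros k.
      replace (al * 10 ^ k - c + de * 10 ^ k)%nat with ((al + de) * 10 ^ k - c)%nat
        by (generalize (HX al k Hc); nia).
      rewrite !HXR, Rdiv_mult_l_l by (try lia; generalize (pow10_ge1 k); lra).
      reflexivity. }
    apply is_lim_seq_div'; try apply is_lim_seq_sub_div_pow10.
    apply Rgt_not_eq, lt_0_INR; lia.
Qed.

(** * Counting digits *)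

Section Digits.
Local Open Scope nat_scope.

Lemma ndigits_aux_eq D : forall fuel x, 10 ^ D <= x < 10 ^ S D -> D < fuel ->
  ndigits_aux fuel x = S D.
Proof.
  induction D as [|D IH]; intros [|fuel] x Hx Hf; try lia; cbn [ndigits_aux].
  - replace (Nat.ltb x 10) with true by (symmetry; apply Nat.ltb_lt; simpl in Hx; lia).
    reflexivity.
  - rewrite !Nat.pow_succ_r' in Hx; generalize (pow10_ge1_nat D); intros HD.
    replace (Nat.ltb x 10) with false by (symmetry; apply Nat.ltb_ge; lia).
    f_equal; apply IH; [rewrite Nat.pow_succ_r'; split | lia].
    + apply Nat.div_le_lower_bound; lia.
    + apply Nat.Div0.div_lt_upper_bound; lia.
Qed.

Lemma ndigits_eq D x : 10 ^ D <= x < 10 ^ S D -> ndigits x = S D.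
Proof.
  intros Hx; apply ndigits_aux_eq; [exact Hx|].
  generalize (Nat.pow_gt_lin_r 10 D ltac:(lia)); lia.
Qed.

Lemma pth_digit_block p q k x : 1 <= p -> 10 ^ (p - 1) <= q < 10 ^ p ->
  q * 10 ^ k <= x < (q + 1) * 10 ^ k -> pth_digit p x = q mod 10.
Proof.
  intros Hp Hq Hx; unfold pth_digit.
  generalize (pow10_ge1_nat k); intros Hk.
  rewrite (ndigits_eq (p - 1 + k) x).
  - replace (S (p - 1 + k) - p) with k by lia.
    f_equal; symmetry; apply (Nat.div_unique x (10 ^ k) q (x - q * 10 ^ k)); nia.
  - replace (S (p - 1 + k)) with (p + k) by lia.
    rewrite !Nat.pow_add_r; split; nia.
Qed.

Definition digit_count (d p lo n : nat) : nat :=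
  length (filter (fun x => Nat.eqb (pth_digit p x) d) (seq lo n)).

Lemma digit_count_app d p lo n1 n2 :
  digit_count d p lo (n1 + n2) = digit_count d p lo n1 + digit_count d p (lo + n1) n2.
Proof. unfold digit_count; rewrite seq_app, filter_app, length_app; reflexivity. Qed.

Lemma digit_count_const d p lo n c :
  (forall x, lo <= x < lo + n -> pth_digit p x = c) ->
  digit_count d p lo n = if Nat.eqb c d then n else 0.
Proof.
  revert lo; induction n as [|n IH]; intros lo H.
  - destruct (Nat.eqb c d); reflexivity.
  - change (S n) with (1 + n); rewrite digit_count_app, IH by (intros; apply H; lia).
    unfold digit_count; simpl; rewrite (H lo) by lia.
    destruct (Nat.eqb c d); reflexivity.
Qed.

Variable p : nat.
Hypothesis hp : 2 <= p.

Lemma pow10_p1_p2 : 10 ^ (p - 1) = 10 * 10 ^ (p - 2).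
Proof. rewrite <- Nat.pow_succ_r'; f_equal; lia. Qed.

Lemma pow10_p_p1 : 10 ^ p = 10 * 10 ^ (p - 1).
Proof. rewrite <- Nat.pow_succ_r'; f_equal; lia. Qed.

Local Notation a := (10 ^ (p - 1)).
Local Notation j0 := (10 ^ (p - 2)).

Variable d : nat.

Lemma digit_count_cell j e k n : j0 <= j < a -> e < 10 -> n <= 10 ^ k ->
  digit_count d p ((10 * j + e) * 10 ^ k) n = if Nat.eqb e d then n else 0.
Proof.
  intros Hj He Hn; apply digit_count_const; intros x Hx.
  rewrite (pth_digit_block p (10 * j + e) k x).
  - rewrite Nat.add_comm, Nat.mul_comm, Nat.Div0.mod_add; apply Nat.mod_small, He.
  - lia.
  - rewrite pow10_p_p1, pow10_p1_p2 in *; lia.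
  - rewrite Nat.mul_add_distr_r in *; lia.
Qed.

Lemma digit_count_prefix j e k : j0 <= j < a -> e <= 10 ->
  digit_count d p (10 * j * 10 ^ k) (e * 10 ^ k) = if Nat.ltb d e then 10 ^ k else 0.
Proof.
  intros Hj He; induction e as [|e IH]; [reflexivity|].
  replace (S e * 10 ^ k) with (e * 10 ^ k + 10 ^ k) by lia.
  rewrite digit_count_app, IH by lia.
  replace (10 * j * 10 ^ k + e * 10 ^ k) with ((10 * j + e) * 10 ^ k) by lia.
  rewrite digit_count_cell by lia.
  destruct (Nat.ltb_spec d e), (Nat.eqb_spec e d), (Nat.ltb_spec d (S e)); lia.
Qed.

Hypothesis hd : d <= 9.

Lemma digit_count_prefixes t k : j0 + t <= a ->
  digit_count d p (j0 * (10 * 10 ^ k)) (t * (10 * 10 ^ k)) = t * 10 ^ k.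
Proof.
  intros Ht; induction t as [|t IH]; [reflexivity|].
  replace (S t * (10 * 10 ^ k)) with (t * (10 * 10 ^ k) + 10 * 10 ^ k) by lia.
  rewrite digit_count_app, IH by lia.
  replace (j0 * (10 * 10 ^ k) + t * (10 * 10 ^ k)) with (10 * (j0 + t) * 10 ^ k) by lia.
  rewrite (digit_count_prefix _ 10) by lia.
  replace (Nat.ltb d 10) with true by (symmetry; apply Nat.ltb_lt; lia); lia.
Qed.

(* Each level of numbers with [p + i] digits contributes [9 j0 10^i], and the
   geometric sum over [i < k] is [j0 (10^k - 1)]. *)
Lemma digit_count_below_level k :
  digit_count d p a (a * 10 ^ k - a) = j0 * 10 ^ k - j0.
Proof.
  rewrite pow10_p1_p2.
  generalize (pow10_ge1_nat (p - 2)); intros Hj0.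
  induction k as [|k IH]; [rewrite Nat.pow_0_r, !Nat.mul_1_r, !Nat.sub_diag; reflexivity|].
  generalize (pow10_ge1_nat k); intros Hk.
  rewrite Nat.pow_succ_r'.
  replace (10 * j0 * (10 * 10 ^ k) - 10 * j0) with
    ((10 * j0 * 10 ^ k - 10 * j0) + 9 * j0 * (10 * 10 ^ k)) by nia.
  rewrite digit_count_app, IH.
  replace (10 * j0 + (10 * j0 * 10 ^ k - 10 * j0)) with (j0 * (10 * 10 ^ k)) by nia.
  rewrite digit_count_prefixes by (rewrite pow10_p1_p2; lia); nia.
Qed.

Lemma Ncount_eq j e r k : j0 <= j < a -> e < 10 -> r < 10 ^ k ->
  Ncount d p ((10 * j + e) * 10 ^ k + r) =
  j * 10 ^ k - j0 + (if Nat.ltb d e then 10 ^ k else 0)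
  + (if Nat.eqb e d then r + 1 else 0).
Proof.
  intros Hj He Hr.
  generalize pow10_p1_p2 (pow10_ge1_nat k); intros Ha Hk.
  change (Ncount d p ((10 * j + e) * 10 ^ k + r)) with
    (digit_count d p a (S ((10 * j + e) * 10 ^ k + r) - a)).
  replace (S ((10 * j + e) * 10 ^ k + r) - a) with
    ((a * 10 ^ k - a) + ((j - j0) * (10 * 10 ^ k) + (e * 10 ^ k + S r)))
    by (rewrite Ha; nia).
  rewrite digit_count_app, digit_count_below_level, !digit_count_app.
  replace (a + (a * 10 ^ k - a)) with (j0 * (10 * 10 ^ k)) by nia.
  rewrite digit_count_prefixes by lia.
  replace (j0 * (10 * 10 ^ k) + (j - j0) * (10 * 10 ^ k)) with (10 * j * 10 ^ k) by nia.
  rewrite digit_count_prefix by lia.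
  replace (10 * j * 10 ^ k + e * 10 ^ k) with ((10 * j + e) * 10 ^ k) by nia.
  rewrite digit_count_cell by lia.
  set (s := 10 ^ k) in *; set (b := 10 ^ (p - 2)) in *.
  destruct (Nat.ltb d e), (Nat.eqb e d); nia.
Qed.

Lemma Ncount_block j k m : j0 <= j < a -> 10 * j * 10 ^ k <= m < (10 * j + 10) * 10 ^ k ->
  Ncount d p m = j * 10 ^ k - j0
    + (if Nat.ltb d (m / 10 ^ k - 10 * j) then 10 ^ k else 0)
    + (if Nat.eqb (m / 10 ^ k - 10 * j) d then m mod 10 ^ k + 1 else 0).
Proof.
  intros Hj Hm; generalize (pow10_ge1_nat k); intros Hk.
  assert (Hq : 10 * j <= m / 10 ^ k < 10 * j + 10).
  { split; [apply Nat.div_le_lower_bound | apply Nat.Div0.div_lt_upper_bound]; lia. }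
  rewrite <- Ncount_eq by (try apply Nat.mod_upper_bound; lia).
  f_equal; rewrite (Nat.div_mod_eq m (10 ^ k)) at 1; nia.
Qed.

End Digits.

(** * Blocks of integers sharing their leading digits *)

Definition freq (d p m : nat) : R := INR (Ncount d p m) / INR (S m - 10 ^ (p - 1)).

(* L_j; the three terms come from the parts of the block where the p-th digit is
   below, equal to, and above d. *)
Definition block_limit (d j : nat) : R :=
  INR j * ln ((10 * INR j + INR d) / (10 * INR j))
  + (1 - (9 * INR j + INR d) * ln ((10 * INR j + INR d + 1) / (10 * INR j + INR d)))
  + (INR j + 1) * ln (10 * (INR j + 1) / (10 * INR j + INR d + 1)).

Section Blocks.
Variable p : nat.

Local Notation a := (10 ^ (p - 1))%nat.
Local Notation j0 := (10 ^ (p - 2))%nat.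

Lemma sum_inv_shift lo n : (a <= lo)%nat ->
  sum_seq lo n (fun m => / INR (S m - a)) = harm (lo - (a - 1)) n.
Proof.
  intros Hlo; unfold harm; generalize (pow10_ge1_nat (p - 1)); intros Ha.
  replace lo with (lo - (a - 1) + (a - 1))%nat at 1 by lia.
  rewrite sum_seq_shift; apply sum_seq_ext; intros i Hi; do 2 f_equal; lia.
Qed.

Variable d : nat.

Lemma sum_freq_const lo n K : (a <= lo)%nat ->
  (forall m, (lo <= m < lo + n)%nat -> INR (Ncount d p m) = K) ->
  sum_seq lo n (freq d p) = K * harm (lo - (a - 1)) n.
Proof.
  intros Hlo HK; rewrite <- sum_inv_shift, <- sum_seq_scal_l by exact Hlo.
  apply sum_seq_ext; intros m Hm; unfold freq; rewrite HK by exact Hm; reflexivity.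
Qed.

Lemma sum_freq_affine lo n D : (a <= lo)%nat ->
  (forall m, (lo <= m < lo + n)%nat -> INR (Ncount d p m) = INR (S m - a) - D) ->
  sum_seq lo n (freq d p) = INR n - D * harm (lo - (a - 1)) n.
Proof.
  intros Hlo HD; rewrite <- sum_inv_shift by exact Hlo.
  rewrite <- (Rmult_1_r (INR n)), <- (sum_seq_const lo), <- sum_seq_scal_l, <- sum_seq_minus.
  apply sum_seq_ext; intros m Hm; unfold freq; rewrite HD by exact Hm.
  field; apply Rgt_not_eq, lt_0_INR; lia.
Qed.

Hypothesis hp : (2 <= p)%nat.
Hypothesis hd : (d <= 9)%nat.
Variable j : nat.
Hypothesis hj : (j0 <= j < a)%nat.

Lemma INR_Ncount_before_digit k m : (10 * j * 10 ^ k <= m < (10 * j + d) * 10 ^ k)%nat ->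
  INR (Ncount d p m) = INR j * 10 ^ k - INR j0.
Proof.
  intros Hm; generalize (pow10_ge1_nat k); intros Hk.
  assert (Hq : (m / 10 ^ k < 10 * j + d)%nat) by (apply Nat.Div0.div_lt_upper_bound; lia).
  rewrite (Ncount_block p hp d hd j k) by (try split; nia).
  replace (Nat.ltb d (m / 10 ^ k - 10 * j)) with false by (symmetry; apply Nat.ltb_ge; lia).
  replace (Nat.eqb (m / 10 ^ k - 10 * j) d) with false by (symmetry; apply Nat.eqb_neq; lia).
  rewrite !Nat.add_0_r, minus_INR, mult_INR, INR_pow10 by nia; reflexivity.
Qed.

Lemma INR_Ncount_at_digit k m : ((10 * j + d) * 10 ^ k <= m < (10 * j + d + 1) * 10 ^ k)%nat ->
  INR (Ncount d p m) = INR (S m - a) - ((9 * INR j + INR d) * 10 ^ k + INR j0 - INR a).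
Proof.
  intros Hm; generalize (pow10_ge1_nat k); intros Hk.
  assert (Hq : (m / 10 ^ k = 10 * j + d)%nat).
  { symmetry; apply (Nat.div_unique _ _ _ (m - (10 * j + d) * 10 ^ k)); nia. }
  assert (Hr : (m mod 10 ^ k = m - (10 * j + d) * 10 ^ k)%nat).
  { symmetry; apply (Nat.mod_unique _ _ (10 * j + d)); nia. }
  assert (HN : (Ncount d p m + (9 * j + d) * 10 ^ k + j0 = S m)%nat).
  { rewrite (Ncount_block p hp d hd j k) by (try split; nia).
    rewrite Hq, Hr, Nat.add_sub_swap, Nat.sub_diag, Nat.add_0_l, Nat.eqb_refl by lia.
    replace (Nat.ltb d d) with false by (symmetry; apply Nat.ltb_irrefl).
    nia. }
  apply (f_equal INR) in HN; rewrite !plus_INR, !mult_INR, plus_INR, mult_INR, INR_pow10 in HN.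
  rewrite minus_INR by (generalize (pow10_p1_p2 p hp); nia).
  replace (INR 9) with 9 in HN by (simpl; ring); lra.
Qed.

Lemma INR_Ncount_after_digit k m :
  ((10 * j + d + 1) * 10 ^ k <= m < (10 * j + 10) * 10 ^ k)%nat ->
  INR (Ncount d p m) = (INR j + 1) * 10 ^ k - INR j0.
Proof.
  intros Hm; generalize (pow10_ge1_nat k); intros Hk.
  assert (Hq : (10 * j + d + 1 <= m / 10 ^ k)%nat) by (apply Nat.div_le_lower_bound; lia).
  rewrite (Ncount_block p hp d hd j k) by (try split; nia).
  replace (Nat.ltb d (m / 10 ^ k - 10 * j)) with true by (symmetry; apply Nat.ltb_lt; lia).
  replace (Nat.eqb (m / 10 ^ k - 10 * j) d) with false by (symmetry; apply Nat.eqb_neq; lia).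
  rewrite Nat.add_0_r, plus_INR, minus_INR, mult_INR, INR_pow10 by nia; ring.
Qed.

Lemma block_sum_eq k :
  sum_seq (j * (10 * 10 ^ k)) (10 * 10 ^ k) (freq d p) / 10 ^ k =
  (INR j - INR j0 / 10 ^ k) * harm (10 * j * 10 ^ k - (a - 1)) (d * 10 ^ k)
  + (1 - (9 * INR j + INR d - (INR a - INR j0) / 10 ^ k)
         * harm ((10 * j + d) * 10 ^ k - (a - 1)) (1 * 10 ^ k))
  + (INR j + 1 - INR j0 / 10 ^ k)
    * harm ((10 * j + d + 1) * 10 ^ k - (a - 1)) ((9 - d) * 10 ^ k).
Proof.
  generalize (pow10_ge1_nat k) (pow10_ge1 k) (pow10_p1_p2 p hp); intros Hk HkR Ha.
  replace (10 * 10 ^ k)%nat with (d * 10 ^ k + (1 * 10 ^ k + (9 - d) * 10 ^ k))%nat at 2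
    by nia.
  rewrite !sum_seq_app.
  replace (j * (10 * 10 ^ k) + d * 10 ^ k)%nat with ((10 * j + d) * 10 ^ k)%nat by nia.
  replace ((10 * j + d) * 10 ^ k + 1 * 10 ^ k)%nat with ((10 * j + d + 1) * 10 ^ k)%nat
    by nia.
  replace (j * (10 * 10 ^ k))%nat with (10 * j * 10 ^ k)%nat by nia.
  rewrite (sum_freq_const _ _ (INR j * 10 ^ k - INR j0)),
    (sum_freq_affine _ _ ((9 * INR j + INR d) * 10 ^ k + INR j0 - INR a)),
    (sum_freq_const _ _ ((INR j + 1) * 10 ^ k - INR j0)), mult_INR, (INR_pow10 k);
    try (intros; apply INR_Ncount_before_digit || apply INR_Ncount_at_digit
                 || apply INR_Ncount_after_digit; nia); try nia.
  simpl (INR 1); set (s := 10 ^ k) in *; field; lra.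
Qed.

Lemma is_lim_seq_block_sum :
  is_lim_seq (fun k => sum_seq (j * (10 * 10 ^ k)) (10 * 10 ^ k) (freq d p) / 10 ^ k)
    (block_limit d j).
Proof.
  generalize (pow10_p1_p2 p hp); intros Ha.
  assert (INR_10j : forall e, INR (10 * j + e) = 10 * INR j + INR e)
    by (intros; rewrite plus_INR, mult_INR, INR_10; reflexivity).
  eapply is_lim_seq_ext; [intros k; symmetry; apply block_sum_eq|].
  unfold block_limit.
  apply is_lim_seq_plus'; [apply is_lim_seq_plus'|].
  - apply is_lim_seq_mult'; [apply is_lim_seq_sub_div_pow10|].
    pose proof (is_lim_seq_harm_pow10 (10 * j) d (a - 1) ltac:(lia)) as H.
    rewrite INR_10j, mult_INR, INR_10 in H; exact H.
  - apply (is_lim_seq_minus' (fun _ => 1)); [apply is_lim_seq_const|].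
    apply is_lim_seq_mult'; [apply is_lim_seq_sub_div_pow10|].
    pose proof (is_lim_seq_harm_pow10 (10 * j + d) 1 (a - 1) ltac:(lia)) as H.
    replace (INR (10 * j + d + 1)) with (10 * INR j + INR d + 1) in H
      by (rewrite plus_INR, INR_10j; reflexivity).
    rewrite INR_10j in H; exact H.
  - apply is_lim_seq_mult'; [apply is_lim_seq_sub_div_pow10|].
    pose proof (is_lim_seq_harm_pow10 (10 * j + d + 1) (9 - d) (a - 1) ltac:(lia)) as H.
    replace (10 * j + d + 1 + (9 - d))%nat with (10 * (j + 1))%nat in H by lia.
    replace (INR (10 * j + d + 1)) with (10 * INR j + INR d + 1) in H
      by (rewrite plus_INR, INR_10j; reflexivity).
    rewrite mult_INR, INR_10, plus_INR in H; exact H.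
Qed.

End Blocks.
(** * The limit *)

Lemma is_lim_seq_rec_div (q : R) (x y : nat -> R) (Y : R) : 1 < q ->
  (forall k, x (S k) = (x k + y k) / q) -> is_lim_seq y Y ->
  is_lim_seq x (Y / (q - 1)).
Proof.
  intros Hq Hrec Hy; apply is_lim_seq_Reals; apply is_lim_seq_Reals in Hy.
  intros eps Heps; destruct (Hy ((q - 1) * (eps / 2)) ltac:(nra)) as [N HN].
  set (z k := x k - Y / (q - 1)).
  assert (Hstep : forall k, Rabs (z (S k)) <= (Rabs (z k) + Rabs (y k - Y)) / q).
  { intros k; unfold z at 1; rewrite Hrec.
    replace ((x k + y k) / q - Y / (q - 1)) with ((z k + (y k - Y)) * / q)
      by (unfold z; field; lra).
    rewrite Rabs_mult, (Rabs_pos_eq (/ q)) by (left; apply Rinv_0_lt_compat; lra).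
    apply Rmult_le_compat_r; [left; apply Rinv_0_lt_compat; lra | apply Rabs_triang]. }
  assert (Hz : forall i, Rabs (z (N + i)%nat) <= Rabs (z N) / q ^ i + eps / 2).
  { induction i as [|i IH]; [rewrite Nat.add_0_r, pow_O, Rdiv_1_r; lra|].
    rewrite <- plus_n_Sm; eapply Rle_trans; [apply Hstep|].
    assert (0 < q ^ i) by (apply pow_lt; lra).
    replace (Rabs (z N) / q ^ S i + eps / 2)
      with ((Rabs (z N) / q ^ i + eps / 2 + (q - 1) * (eps / 2)) / q)
      by (simpl; field; lra).
    unfold Rdiv at 1 3; apply Rmult_le_compat_r; [left; apply Rinv_0_lt_compat; lra|].
    apply Rplus_le_compat; [exact IH | left; apply HN; lia]. }
  assert (Hgeom : is_lim_seq (fun i => Rabs (z N) / q ^ i) 0).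
  { apply (is_lim_seq_ext (fun i => Rabs (z N) * (/ q) ^ i));
      [intros; rewrite pow_inv; reflexivity|].
    rewrite <- (Rmult_0_r (Rabs (z N))).
    apply (is_lim_seq_mult' (fun _ => Rabs (z N))); [apply is_lim_seq_const|].
    apply is_lim_seq_geom; rewrite Rabs_pos_eq; [|left; apply Rinv_0_lt_compat; lra].
    rewrite <- Rinv_1; apply Rinv_1_lt_contravar; lra. }
  apply is_lim_seq_Reals in Hgeom; destruct (Hgeom (eps / 2) ltac:(lra)) as [M HM].
  exists (N + M)%nat; intros n Hn.
  specialize (Hz (n - N)%nat); specialize (HM (n - N)%nat ltac:(lia)).
  replace (N + (n - N))%nat with n in Hz by lia.
  unfold Rdist in *; rewrite Rminus_0_r, Rabs_pos_eq in HM.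
  - unfold z in *; lra.
  - apply Rdiv_le_0_compat; [apply Rabs_pos | apply pow_lt; lra].
Qed.

Definition level_sum (d p k : nat) : R :=
  sum_seq (10 ^ (p - 1)) (10 ^ (p - 1) * 10 ^ k - 10 ^ (p - 1)) (freq d p).

Section Limit.
Variables p d : nat.

Local Notation a := (10 ^ (p - 1))%nat.
Local Notation j0 := (10 ^ (p - 2))%nat.

Hypothesis hp : (2 <= p)%nat.

Lemma Pdig_level_sum n :
  Pdig d (10 ^ (n + p) - 1) p = level_sum d p (S n) / INR (a * 10 ^ S n - a).
Proof.
  unfold Pdig; replace (S (10 ^ (n + p) - 1) - a)%nat with (a * 10 ^ S n - a)%nat.
  - rewrite Rmult_comm; reflexivity.
  - rewrite <- Nat.pow_add_r; replace (p - 1 + S n)%nat with (n + p)%nat by lia.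
    generalize (pow10_ge1_nat (n + p)); lia.
Qed.

Lemma level_sum_succ k :
  level_sum d p (S k) = level_sum d p k
    + sum_seq j0 (a - j0) (fun j => sum_seq (j * (10 * 10 ^ k)) (10 * 10 ^ k) (freq d p)).
Proof.
  generalize (pow10_p1_p2 p hp) (pow10_ge1_nat k); intros Ha Hk; unfold level_sum.
  replace (a * 10 ^ S k - a)%nat with ((a * 10 ^ k - a) + (a - j0) * (10 * 10 ^ k))%nat
    by (rewrite Nat.pow_succ_r'; nia).
  rewrite sum_seq_app, <- sum_seq_blocks.
  replace (a + (a * 10 ^ k - a))%nat with (j0 * (10 * 10 ^ k))%nat by nia.
  reflexivity.
Qed.

Hypothesis hd : (d <= 9)%nat.

Lemma is_lim_seq_level_sum :
  is_lim_seq (fun k => level_sum d p k / 10 ^ k)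
    (sum_seq j0 (a - j0) (block_limit d) / (10 - 1)).
Proof.
  apply (is_lim_seq_rec_div 10 _ (fun k => sum_seq j0 (a - j0)
    (fun j => sum_seq (j * (10 * 10 ^ k)) (10 * 10 ^ k) (freq d p) / 10 ^ k))); [lra| |].
  - intros k; rewrite level_sum_succ, sum_seq_div_r.
    simpl (10 ^ S k); field; generalize (pow10_ge1 k); lra.
  - apply is_lim_seq_sum_seq; intros j Hj; apply is_lim_seq_block_sum; lia.
Qed.

Lemma is_lim_seq_Pdig_block_limits :
  is_lim_seq (fun n => Pdig d (10 ^ (n + p) - 1) p)
    (sum_seq j0 (a - j0) (block_limit d) / 9 / INR a).
Proof.
  assert (HaR : 0 < INR a) by (apply lt_0_INR, pow10_ge1_nat).
  replace 9 with (10 - 1) by ring.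
  apply (is_lim_seq_ext (fun n => level_sum d p (S n) / 10 ^ S n
                                  / (INR a - INR a / 10 ^ S n))).
  { intros n; rewrite Pdig_level_sum, minus_INR, mult_INR, (INR_pow10 (S n))
      by (generalize (pow10_ge1_nat (S n)); nia).
    assert (Hn : 10 <= 10 ^ S n) by (simpl; generalize (pow10_ge1 n); lra).
    set (s := 10 ^ S n) in *; field; split; nra. }
  apply is_lim_seq_div'; [| |lra].
  - exact (proj1 (is_lim_seq_incr_1 _ _) is_lim_seq_level_sum).
  - exact (proj1 (is_lim_seq_incr_1 _ _) (is_lim_seq_sub_div_pow10 (INR a) (INR a))).
Qed.

End Limit.

Section SummationByParts.
Variables p d : nat.

Local Notation a := (10 ^ (p - 1))%nat.
Local Notation j0 := (10 ^ (p - 2))%nat.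

Let u (j : nat) := ln (10 * INR j + INR d).
Let v (j : nat) := ln (10 * INR j).
Let w (j : nat) := ln (10 * INR j + INR d + 1).

Lemma block_limit_split j : (1 <= j)%nat -> block_limit d j =
  (1 - 9 * (INR j * (w j - u j)) - INR d * (w j - u j))
  + (INR (S j) * v (S j) - INR j * v j) + (INR j * u j - INR (S j) * w j).
Proof.
  intros Hj; assert (0 < INR j) by (apply lt_0_INR; lia); assert (HdR := pos_INR d).
  unfold block_limit, u, v, w; rewrite !ln_div, S_INR by lra; ring.
Qed.

Lemma kdp_sum_seq : kdp d p = sum_seq j0 (a - j0) (fun j => w j - u j).
Proof.
  unfold kdp, sumR; generalize (pow10_ge1_nat (p - 1)) (pow10_ge1_nat (p - 2)); intros Ha Hj0.
  replace (S (a - 1) - j0)%nat with (a - j0)%nat by lia.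
  apply sum_seq_ext; intros j Hj; assert (0 < INR j) by (apply lt_0_INR; lia).
  assert (HdR := pos_INR d); unfold u, w; rewrite ln_div by lra; reflexivity.
Qed.

Lemma ldp_sum_seq : ldp d p = sum_seq j0 (a - j0) (fun j => INR j * (w j - u j)).
Proof.
  unfold ldp, sumR; generalize (pow10_ge1_nat (p - 1)) (pow10_ge1_nat (p - 2)); intros Ha Hj0.
  replace (S (a - 1) - j0)%nat with (a - j0)%nat by lia.
  apply sum_seq_ext; intros j Hj; assert (0 < INR j) by (apply lt_0_INR; lia).
  assert (HdR := pos_INR d); unfold u, w; rewrite ln_div by lra; reflexivity.
Qed.

Lemma mdp_sum_seq : mdp d p = sum_seq j0 (a - 1 - j0) (fun j => u (S j) - w j).
Proof.
  unfold mdp, sumR; generalize (pow10_ge1_nat (p - 1)) (pow10_ge1_nat (p - 2)); intros Ha Hj0.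
  replace (S (a - 2) - j0)%nat with (a - 1 - j0)%nat by lia.
  apply sum_seq_ext; intros j Hj; assert (0 < INR j) by (apply lt_0_INR; lia).
  assert (HdR := pos_INR d); unfold u, w; rewrite ln_div, S_INR by lra; reflexivity.
Qed.

Lemma ndp_sum_seq : ndp d p = sum_seq j0 (a - 1 - j0) (fun j => INR j * (u (S j) - w j)).
Proof.
  unfold ndp, sumR; generalize (pow10_ge1_nat (p - 1)) (pow10_ge1_nat (p - 2)); intros Ha Hj0.
  replace (S (a - 2) - j0)%nat with (a - 1 - j0)%nat by lia.
  apply sum_seq_ext; intros j Hj; assert (0 < INR j) by (apply lt_0_INR; lia).
  assert (HdR := pos_INR d); unfold u, w; rewrite ln_div, S_INR by lra; reflexivity.
Qed.

Hypothesis hp : (2 <= p)%nat.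

(* Abel summation, from
   [j u_j - (j+1) w_j = (j+1) (u_(j+1) - w_j) - ((j+1) u_(j+1) - j u_j)]. *)
Lemma sum_seq_by_parts :
  sum_seq j0 (a - j0) (fun j => INR j * u j - INR (S j) * w j) =
  ndp d p + mdp d p + INR a * (u a - w (a - 1)%nat) - (INR a * u a - INR j0 * u j0).
Proof.
  generalize (pow10_p1_p2 p hp) (pow10_ge1_nat (p - 2)); intros Ha Hj0.
  replace (a - j0)%nat with (S (a - 1 - j0)) by lia.
  rewrite (sum_seq_ext _ _ _ (fun j => INR (S j) * (u (S j) - w j)
                                     - (INR (S j) * u (S j) - INR j * u j)))
    by (intros; ring).
  rewrite sum_seq_minus, (sum_seq_telescope _ _ (fun j => INR j * u j)), sum_seq_Sr.
  replace (sum_seq j0 (a - 1 - j0) (fun j => INR (S j) * (u (S j) - w j)))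
    with (ndp d p + mdp d p)
    by (rewrite mdp_sum_seq, ndp_sum_seq, <- sum_seq_plus; apply sum_seq_ext;
        intros; rewrite S_INR; ring).
  replace (j0 + S (a - 1 - j0))%nat with a by lia.
  replace (j0 + (a - 1 - j0))%nat with (a - 1)%nat by lia.
  replace (S (a - 1)) with a by lia; ring.
Qed.

Lemma sum_block_limit :
  sum_seq j0 (a - j0) (block_limit d) =
  INR (a - j0) - 9 * ldp d p - INR d * kdp d p + ndp d p + mdp d p
  + INR a * (v a - w (a - 1)%nat) + INR j0 * (u j0 - v j0).
Proof.
  generalize (pow10_p1_p2 p hp) (pow10_ge1_nat (p - 2)); intros Ha Hj0.
  rewrite (sum_seq_ext _ _ _ _
            (fun j Hj => block_limit_split j (Nat.le_trans _ _ _ Hj0 (proj1 Hj)))),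
    !sum_seq_plus, sum_seq_by_parts, (sum_seq_telescope _ _ (fun j => INR j * v j)),
    !sum_seq_minus, sum_seq_const, !sum_seq_scal_l, <- kdp_sum_seq, <- ldp_sum_seq.
  replace (j0 + (a - j0))%nat with a by lia; ring.
Qed.

Lemma sum_block_limit_eq :
  sum_seq j0 (a - j0) (block_limit d) / 9 / INR a =
  1 / 10
  + (ndp d p + mdp d p - 9 * ldp d p - INR d * kdp d p) / (9 * 10 ^ (p - 1))
  + 1 / 90 * ln ((10 ^ (p - 1) + INR d) / 10 ^ (p - 1))
  + 1 / 9 * ln (10 ^ p / (10 ^ p - 10 + INR d + 1)).
Proof.
  generalize (pow10_p1_p2 p hp) (pow10_ge1_nat (p - 2)); intros Ha Hj0.
  assert (HaR : INR a = 10 * INR j0) by (rewrite Ha, mult_INR, INR_10; reflexivity).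
  assert (Hj0R : 1 <= INR j0) by (apply (le_INR 1); exact Hj0).
  assert (HdR := pos_INR d).
  rewrite sum_block_limit, minus_INR by lia.
  rewrite <- (INR_pow10 p), (pow10_p_p1 p hp), mult_INR, INR_10, <- (INR_pow10 (p - 1)).
  replace (ln ((INR a + INR d) / INR a)) with (u j0 - v j0)
    by (unfold u, v; rewrite HaR, ln_div by lra; reflexivity).
  replace (ln (10 * INR a / (10 * INR a - 10 + INR d + 1))) with (v a - w (a - 1)%nat).
  - rewrite HaR; field; lra.
  - unfold v, w; rewrite minus_INR, ln_div by (try lia; simpl (INR 1); lra).
    simpl (INR 1); f_equal; f_equal; ring.
Qed.

End SummationByParts.

Theorem proposition2 (p d : nat) (hp : (2 <= p)%nat) (hd : (d <= 9)%nat) :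
  is_lim_seq (fun n : nat => Pdig d (10 ^ (n + p) - 1) p)
    (1 / 10
     + (ndp d p + mdp d p - 9 * ldp d p - INR d * kdp d p) / (9 * 10 ^ (p - 1))
     + 1 / 90 * ln ((10 ^ (p - 1) + INR d) / 10 ^ (p - 1))
     + 1 / 9 * ln (10 ^ p / (10 ^ p - 10 + INR d + 1))).
Proof.
  rewrite <- sum_block_limit_eq by exact hp.
  exact (is_lim_seq_Pdig_block_limits p d hp hd).
Qed.
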